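(* Let $G$ be a graph containing no cycle of length 6 and let $x\in V(G)$. Then $x$ is extendable in $G$ if and only if $x$ is extendable in $H_x$.
   Context: All graphs are finite, simple and undirected; ''containing no cycle of length 6'' means having no subgraph (not necessarily induced) isomorphic to $C_6$. For a vertex set $S$, $N_i(S)$ is the set of vertices at distance exactly $i$ from $S$, $N_i[S]$ the set at distance at most $i$, $N(S)=N_1(S)$, $N[S]=N_1[S]$, and $N(v)=N(\{v\})$ etc.; $S$ dominates $T$ if $T\subseteq N[S]$. A vertex $v$ of a graph $H$ is extendable in $H$ if there is no independent set $S\subseteq N_2(v)$ (distances computed in $H$) dominating $N(v)$ (in $H$). Let $A^*$ be the set of connected components $A$ of $G[N_2(x)]$ for which there exists a vertex $a\in V(A)$ with $N(x)\cap N(a)=N(x)\cap N(V(A))$, and let $V(A^* )$ be the union of their vertex sets. Define $H_x=G[N_2[x]\setminus N[V(A^* )]]$ (neighbourhoods taken in $G$). *)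

(* A finite simple graph is a symmetric irreflexive relation
   e : rel T on a finType T. Induced subgraphs are given by a vertex set U. *)
From mathcomp Require Import all_boot.
Set Implicit Arguments. Unset Strict Implicit. Unset Printing Implicit Defensive.

Section Graphs.
Variable T : finType.
Variable e : rel T.

(* ball U S i = N_i[S] computed in the induced subgraph G[U]
   (vertices of U at distance at most i from S :&: U). *)
Definition ball (U S : {set T}) (i : nat) : {set T} :=
  iter i (fun B => B :|: [set y in U | [exists z in B, e z y]]) (S :&: U).

Definition Nd (U S : {set T}) (i : nat) : {set T} :=
  if i is j.+1 then ball U S i :\: ball U S j else ball U S 0.

Definition independent (S : {set T}) : bool :=
  [forall y in S, forall z in S, ~~ e y z].

Definition extendable (U : {set T}) (v : T) : Prop :=
  ~ exists S : {set T},
      [/\ S \subset Nd U [set v] 2, independent S & Nd U [set v] 1 \subset ball U S 1].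

(* G contains no (not necessarily induced) cycle of length 6 *)
Definition C6_free : Prop :=
  ~ exists f : 'I_6 -> T, injective f /\ forall i : 'I_6, e (f i) (f (ordS i)).

Section Hx.
Variable x : T.
Definition N2x : {set T} := Nd setT [set x] 2.
Definition N1x : {set T} := Nd setT [set x] 1.
Definition rN2 : rel T := [rel y z | [&& e y z, y \in N2x & z \in N2x]].
Definition comp (a : T) : {set T} := [set z | connect rN2 a z].
Definition good_comp (A : {set T}) : bool :=
  [exists a in A, N1x :&: Nd setT [set a] 1 == N1x :&: Nd setT A 1].
Definition VAstar : {set T} := [set y in N2x | good_comp (comp y)].
(* vertex set of H_x = G[N_2[x] \ N[V(A-star)]] *)
Definition Hx_set : {set T} := ball setT [set x] 2 :\: ball setT VAstar 1.
End Hx.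
End Graphs.

(* Each component A of G[N_2(x)] in A* has a vertex a seeing all of N(x) ∩ N(A),
   so one such representative per component (distinct components of G[N_2(x)]
   are non-adjacent) gives an independent set in N_2(x) dominating
   N(x) ∩ N[V(A* )].  Hence an independent dominating set S of H_x
   extends to one of G by adding the representatives (S avoids N[V(A* )]);
   conversely, the vertices of a dominating set of G that see N(x) ∩ V(H_x)
   lie in H_x and dominate it there.  No C_6-freeness is needed for this. *)
From Pilot Require Import Defs.
From mathcomp Require Import all_boot.
Set Implicit Arguments. Unset Strict Implicit. Unset Printing Implicit Defensive.

Section Extendability.
Variables (T : finType) (e : rel T).
Hypotheses (e_sym : symmetric e) (e_irr : irreflexive e).

Lemma ball0E (U S : {set T}) y : (y \in ball e U S 0) = (y \in S) && (y \in U).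
Proof. by rewrite /ball /= inE. Qed.

Lemma ball1P (U S : {set T}) y :
  y \in ball e U S 1 <->
  y \in U /\ (y \in S \/ exists z, [/\ z \in S, z \in U & e z y]).
Proof.
rewrite /ball /= !inE; split.
  case/orP=> [/andP[-> ->]|/andP[-> /existsP[z]]]; first by split=> //; left.
  by rewrite !inE => /andP[/andP[? ?] ?]; split=> //; right; exists z.
case=> -> [->|[z [Sz Uz ezy]]]; rewrite ?orbT //; apply/orP; right.
by apply/existsP; exists z; rewrite !inE Sz Uz ezy.
Qed.

Lemma ball2P (U S : {set T}) y :
  y \in ball e U S 2 <->
  y \in ball e U S 1 \/ (y \in U /\ exists z, z \in ball e U S 1 /\ e z y).
Proof.
rewrite [ball e U S 2]/ball /= inE; split.
  case/orP=> [|]; first by left.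
  by rewrite inE => /andP[? /existsP[z /andP[? ?]]]; right; split=> //; exists z.
case=> [->//|[Uy [z [? ?]]]]; apply/orP; right; rewrite inE Uy /=.
by apply/existsP; exists z; apply/andP.
Qed.

Lemma ball1T (S : {set T}) y :
  y \in ball e setT S 1 <-> y \in S \/ exists2 z, z \in S & e z y.
Proof.
split=> [/ball1P[_ [|[z [Sz _ ezy]]]]|yS]; [by left|by right; exists z|].
apply/ball1P; split; first exact: in_setT.
by case: yS => [|[z Sz ezy]]; [left|right; exists z; rewrite in_setT].
Qed.

Lemma NdT1P (A : {set T}) y :
  y \in Nd e setT A 1 <-> y \notin A /\ exists2 z, z \in A & e z y.
Proof.
rewrite /Nd in_setD ball0E in_setT andbT.
split=> [/andP[yA /ball1T[Ay|]]|[yA zy]]; [by rewrite Ay in yA|by split|].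
by rewrite yA; apply/ball1T; right.
Qed.

Lemma Nd1P (U : {set T}) x y :
  x \in U -> (y \in Nd e U [set x] 1 <-> y \in U /\ e x y).
Proof.
move=> Ux; rewrite /Nd in_setD ball0E in_set1; split.
  case/andP=> yx /ball1P[Uy [/set1P yE|[z [/set1P -> _ exy]]]] //.
  by rewrite yE eqxx Ux in yx.
case=> Uy exy; apply/andP; split.
  by rewrite (_ : y == x = false) //; apply: contraTF exy => /eqP ->; rewrite e_irr.
by apply/ball1P; split=> //; right; exists x; rewrite inE.
Qed.

Lemma Nd2P (U : {set T}) x y : x \in U ->
  y \in Nd e U [set x] 2 <->
  [/\ y \in U, y != x, ~~ e x y & exists z, [/\ z \in U, e x z & e z y]].
Proof.
move=> Ux; rewrite /Nd in_setD; split.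
  case/andP=> yN1 /ball2P[|[Uy [z [Nz ezy]]]]; first by move/negP: yN1.
  have yx : y != x.
    by apply: contraNneq yN1 => ->; apply/ball1P; split=> //; left; rewrite inE.
  have exy : ~~ e x y.
    by apply: contra yN1 => exy; apply/ball1P; split=> //; right; exists x; rewrite inE.
  split=> //; case/ball1P: Nz => Uz [/set1P zE|[w [/set1P -> _ exz]]].
    by move: exy; rewrite -zE ezy.
  by exists z.
case=> Uy yx exy [z [Uz exz ezy]]; apply/andP; split.
  apply/negP => /ball1P[_ [/set1P yE|[w [/set1P wE _ ewy]]]].
    by rewrite yE eqxx in yx.
  by move: exy; rewrite -wE ewy.
apply/ball2P; right; split=> //; exists z; split=> //.
by apply/ball1P; split=> //; right; exists x; rewrite inE.
Qed.

Lemma Nd2_sub (U : {set T}) x :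
  x \in U -> Nd e U [set x] 2 \subset Nd e setT [set x] 2.
Proof.
move=> Ux; apply/subsetP => y /(Nd2P _ Ux)[_ yx exy [z [_ exz ezy]]].
by apply/(Nd2P _ (in_setT x)); split=> //; exists z; rewrite in_setT.
Qed.

Lemma independentS (A B : {set T}) :
  A \subset B -> independent e B -> independent e A.
Proof.
rewrite /independent => /subsetP AB /forall_inP indB; apply/forall_inP => y Ay.
by apply/forall_inP => z Az; move/forall_inP: (indB y (AB y Ay)); apply; apply: AB.
Qed.

Lemma independentU (A B : {set T}) :
  independent e A -> independent e B ->
  (forall y z, y \in A -> z \in B -> ~~ e y z) ->
  independent e (A :|: B).
Proof.
rewrite /independent => /forall_inP indA /forall_inP indB AB.
apply/forall_inP => y yAB; apply/forall_inP => z.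
move: yAB; rewrite !inE => /orP[Ay|By] /orP[Az|Bz].
- exact: (forall_inP (indA y Ay)).
- exact: AB.
- by rewrite e_sym; apply: AB.
- exact: (forall_inP (indB y By)).
Qed.

Definition obstruction (U : {set T}) (v : T) (S : {set T}) : Prop :=
  [/\ S \subset Nd e U [set v] 2, independent e S
     & Nd e U [set v] 1 \subset ball e U S 1].

Variable x : T.

Local Notation H := (Hx_set e x).
Local Notation N1 := (N1x e x).
Local Notation N2 := (N2x e x).
Local Notation VA := (VAstar e x).
Local Notation comp := (Defs.comp e x).
Local Notation rN2 := (rN2 e x).

Lemma N1E y : (y \in N1) = e x y.
Proof.
apply/idP/idP => [/(Nd1P _ (in_setT x))[] //|exy].
by apply/(Nd1P _ (in_setT x)); rewrite in_setT.
Qed.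

Lemma N2_notN1 y : y \in N2 -> ~~ e x y.
Proof. by case/(Nd2P _ (in_setT x)). Qed.

Lemma rN2_sym : symmetric rN2.
Proof. by move=> y z; rewrite /rN2 /= e_sym [(y \in N2) && _]andbC. Qed.

Lemma comp_N2 y w : y \in N2 -> w \in comp y -> w \in N2.
Proof.
move=> Ny; rewrite [_ \in comp y]inE => /connectP[p yp ->] {w}.
by elim: p y Ny yp => //= a p IHp y _ /andP[/and3P[_ _ Na] ap]; apply: IHp ap.
Qed.

Lemma comp_connect y z : connect rN2 y z -> comp y = comp z.
Proof.
move=> yz; apply/setP => w; rewrite !inE; apply/idP/idP; last exact: connect_trans.
by apply: connect_trans; rewrite (sym_connect_sym rN2_sym).
Qed.

Lemma comp_edge y z : y \in N2 -> z \in N2 -> e y z -> comp y = comp z.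
Proof. by move=> Ny Nz eyz; apply/comp_connect/connect1; rewrite /rN2 /= eyz Ny Nz. Qed.

Lemma VA_N2 y : y \in VA -> y \in N2.
Proof. by rewrite inE => /andP[]. Qed.

Lemma VA_edge z s : z \in VA -> s \in N2 -> e z s -> s \in VA.
Proof.
rewrite inE => /andP[Nz good] Ns ezs.
by rewrite inE Ns -(comp_edge Nz Ns ezs).
Qed.

Definition rep (A : {set T}) : option T :=
  [pick a in A | N1 :&: Nd e setT [set a] 1 == N1 :&: Nd e setT A 1].

Definition reps : {set T} := [set a in VA | rep (comp a) == Some a].

Lemma reps_VA a : a \in reps -> a \in VA.
Proof. by rewrite inE => /andP[]. Qed.

Lemma reps_independent : independent e reps.
Proof.
apply/forall_inP => a; rewrite inE => /andP[VAa /eqP ra].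
apply/forall_inP => b; rewrite inE => /andP[VAb /eqP rb]; apply/negP => eab.
move: ra; rewrite (comp_edge (VA_N2 VAa) (VA_N2 VAb) eab) rb => -[ba].
by move: eab; rewrite ba e_irr.
Qed.

Lemma reps_dominate z u :
  z \in VA -> e x u -> e z u -> exists2 a, a \in reps & e a u.
Proof.
move=> VAz exu ezu; have VAz' := VAz; rewrite inE in VAz'.
case/andP: VAz' => Nz good.
have [a /andP[za sees] ra] : exists2 a, (a \in comp z) &&
    (N1 :&: Nd e setT [set a] 1 == N1 :&: Nd e setT (comp z) 1) & rep (comp z) = Some a.
  rewrite /rep; case: pickP => [a aP|none]; first by exists a.
  by case/exists_inP: good => a za sees; move: (none a); rewrite /= za sees.
have za' : comp z = comp a by apply: comp_connect; rewrite inE in za.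
exists a.
  by rewrite inE -za' ra eqxx andbT inE (comp_N2 Nz za) -za'.
have : u \in N1 :&: Nd e setT (comp z) 1.
  rewrite inE N1E exu; apply/NdT1P; split; last by exists z; rewrite // inE connect0.
  by apply: contraTN exu => /(comp_N2 Nz)/N2_notN1.
rewrite -(eqP sees) inE => /andP[_ /NdT1P[_ [b /set1P -> //]]].
Qed.

Lemma x_in_Hx : x \in H.
Proof.
rewrite in_setD; apply/andP; split.
  apply/negP => /ball1T[/VA_N2/(Nd2P _ (in_setT x))[_]|[z /VA_N2/N2_notN1]].
    by rewrite eqxx.
  by rewrite e_sym => /negP.
by apply/ball2P; left; apply/ball1T; left; rewrite inE.
Qed.

Lemma Hx_N1 u : e x u -> u \notin ball e setT VA 1 -> u \in H.
Proof.
move=> exu uVA; rewrite in_setD uVA; apply/ball2P; left.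
by apply/ball1T; right; exists x; rewrite ?inE.
Qed.

Lemma Hx_VA y z : y \in H -> z \in VA -> ~~ e y z.
Proof.
rewrite in_setD => /andP[yVA _] VAz; apply: contra yVA => eyz.
by apply/ball1T; right; exists z; rewrite // e_sym.
Qed.

Lemma Hx_N2 s u : s \in N2 -> u \in H -> e u s -> s \in H.
Proof.
move=> Ns Hu eus; rewrite in_setD; apply/andP; split; last first.
  by move: Ns; rewrite in_setD => /andP[].
apply/negP => /ball1T sVA.
have VAs : s \in VA by case: sVA => [//|[z VAz ezs]]; apply: VA_edge VAz Ns ezs.
by move/negP: (Hx_VA Hu VAs); rewrite eus.
Qed.

Lemma obstruction_lift S : obstruction H x S -> obstruction setT x (S :|: reps).
Proof.
have Tx := in_setT x.
case=> SN2 indS dom; have SH y : y \in S -> y \in H.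
  by move=> /(subsetP SN2)/(Nd2P _ x_in_Hx)[].
split.
- rewrite subUset (subset_trans SN2 (Nd2_sub x_in_Hx)) /=.
  by apply/subsetP => a /reps_VA/VA_N2.
- apply: independentU => // [|y a Sy /reps_VA VAa]; first exact: reps_independent.
  exact: Hx_VA (SH y Sy) VAa.
- apply/subsetP => u /(Nd1P _ Tx)[_ exu]; apply/ball1T.
  have [/ball1T[/VA_N2/N2_notN1|[z VAz ezu]]|uVA] :=
    boolP (u \in ball e setT VA 1); first by rewrite exu.
    by have [a ra eau] := reps_dominate VAz exu ezu; right; exists a; rewrite // inE ra orbT.
  have /(subsetP dom)/ball1P[_ [Su|[s [Ss _ esu]]]] : u \in Nd e H [set x] 1.
    by apply/(Nd1P _ x_in_Hx); rewrite Hx_N1.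
    by left; rewrite inE Su.
  by right; exists s; rewrite // inE Ss.
Qed.

Lemma obstruction_restrict S :
  obstruction setT x S ->
  obstruction H x [set s in S | [exists u in Nd e H [set x] 1, e u s]].
Proof.
have Tx := in_setT x.
case=> SN2 indS dom; set S' := [set s in S | _].
have S'S : S' \subset S by apply/subsetP => s; rewrite inE => /andP[].
have S'H s : s \in S' -> [/\ s \in H, s \in N2 & exists2 u, u \in H & e x u /\ e u s].
  rewrite inE => /andP[Ss /exists_inP[u /(Nd1P _ x_in_Hx)[Hu exu] eus]].
  have Ns := subsetP SN2 s Ss.
  by split=> //; [apply: Hx_N2 Ns Hu eus | exists u].
split.
- apply/subsetP => s /S'H[Hs /(Nd2P _ Tx)[_ sx exs _] [u Hu [exu eus]]].
  by apply/(Nd2P _ x_in_Hx); split=> //; exists u.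
- exact: independentS indS.
- apply/subsetP => u N1u; have [Hu exu] := (Nd1P _ x_in_Hx).1 N1u.
  have /(subsetP dom)/ball1T[/(subsetP SN2)/N2_notN1|[s Ss esu]] :
      u \in Nd e setT [set x] 1 by apply/(Nd1P _ Tx).
    by rewrite exu.
  have S's : s \in S' by rewrite inE Ss; apply/exists_inP; exists u; rewrite // e_sym.
  by apply/ball1P; split=> //; right; exists s; have [Hs _ _] := S'H s S's.
Qed.

End Extendability.

Theorem lemma2p8 (T : finType) (e : rel T) (e_sym : symmetric e)
  (e_irr : irreflexive e) (hC6 : C6_free e) (x : T) :
  extendable e setT x <-> extendable e (Hx_set e x) x.
Proof.
split=> not_obstructed [S obS]; apply: not_obstructed.
- exact: ex_intro (obstruction_lift e_sym e_irr obS).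
- exact: ex_intro (obstruction_restrict e_sym e_irr obS).
Qed.
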